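(* For all integers $3\le n\le m$, \[ \gamma_{2t}(K_n\Box K_n)\le\gamma_{2t}(K_n\Box K_m)\le\min\{2n,\ \gamma_{2t}(K_n\Box K_n)+m-n\}. \]
   Context: For a graph $G=(V,E)$, a set $S\subseteq V$ is a total $2$-dominating set if every vertex of $V$ (including those in $S$) is adjacent to at least $2$ vertices of $S$; $\gamma_{2t}(G)$ is the minimum cardinality of such a set. $G\Box H$ denotes the Cartesian product: vertex set $V(G)\times V(H)$, with $(u_1,v_1)\sim(u_2,v_2)$ iff either $u_1=u_2$ and $v_1\sim v_2$, or $v_1=v_2$ and $u_1\sim u_2$. $K_n$ is the complete graph on $n$ vertices. *)

From mathcomp Require Import all_boot.
Set Implicit Arguments. Unset Strict Implicit. Unset Printing Implicit Defensive.

Definition total2dom (T : finType) (adj : rel T) (S : {set T}) : bool :=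
  [forall v : T, 2 <= #|[set u in S | adj v u]|].

(* gamma_{2t}: minimum cardinality of a total 2-dominating set.
   (If none exists, the value is #|T|.+1; this never happens for the graphs
   used below.) *)
Definition gamma2t (T : finType) (adj : rel T) : nat :=
  \big[minn/#|T|.+1]_(S : {set T} | total2dom adj S) #|S|.

Definition Kadj (n : nat) : rel 'I_n := fun i j => i != j.

Definition cartprod (U V : finType) (a : rel U) (b : rel V) : rel (U * V) :=
  fun x y => ((x.1 == y.1) && b x.2 y.2) || ((x.2 == y.2) && a x.1 y.1).

Definition gamma2t_KK (n m : nat) : nat :=
  gamma2t (cartprod (@Kadj n) (@Kadj m)).

From mathcomp Require Import all_boot zify.
Set Implicit Arguments. Unset Strict Implicit. Unset Printing Implicit Defensive.

(* Two full columns of K_n [] K_m form a total 2-dominating set, whence the bound 2n.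
   The other bounds follow by induction on m >= n, comparing K_n [] K_m with
   K_n [] K_(m+1).  Adding a column costs at most one vertex: a total 2-dominating set
   either has two vertices in every column (so at least 2m >= 2n of them), or it meets
   every row and meets some row r twice, and then adding (r, new) dominates the new
   column.  Deleting a column costs nothing unless every column holds two vertices
   (again at least 2n of them): a column with at most one vertex is either empty, or
   its lone vertex (x, j) can be moved to an empty cell of row x, or row x is full and
   each of its vertices has m >= 3 neighbours there, so it survives losing (x, j). *)

Section TotalDomination.

Variables (T : finType) (adj : rel T).

Definition nbhd (S : {set T}) (v : T) : {set T} := [set u in S | adj v u].

Lemma in_nbhd (S : {set T}) (v u : T) : (u \in nbhd S v) = (u \in S) && adj v u.
Proof. by rewrite inE. Qed.

Lemma total2domP (S : {set T}) : reflect (forall v, 1 < #|nbhd S v|) (total2dom adj S).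
Proof. exact: forallP. Qed.

Lemma gamma2t_le (S : {set T}) : total2dom adj S -> gamma2t adj <= #|S|.
Proof.
move=> domS; rewrite /gamma2t -big_filter.
have : S \in [seq S <- index_enum _ | total2dom adj S].
  by rewrite mem_filter domS mem_index_enum.
elim: (filter _ _) => //= S' r IHr; rewrite in_cons big_cons => /predU1P [<-|/IHr].
- exact: geq_minl.
- exact/leq_trans/geq_minr.
Qed.

Lemma gamma2t_attained (S0 : {set T}) :
  total2dom adj S0 -> exists2 S, total2dom adj S & gamma2t adj = #|S|.
Proof.
move=> domS0; case: (arg_minnP (fun S : {set T} => #|S|) domS0) => S domS minS.
exists S => //; apply/eqP; rewrite eqn_leq gamma2t_le //=.
apply: (big_ind (fun k => #|S| <= k)) => [|k l|S' /minS] //.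
- exact: leq_trans (max_card _) _.
- by rewrite leq_min => -> ->.
Qed.

Lemma card_nbhd_move (S : {set T}) (a b v : T) :
  b \notin S -> (adj v a -> adj v b) -> #|nbhd S v| <= #|nbhd (b |: S :\ a) v|.
Proof.
move=> bNS adj_ab; rewrite (cardsD1 a) [X in _ <= X](cardsD1 b) leq_add //.
  by rewrite !in_nbhd setU11; case: (adj v a) adj_ab => [->|_]; rewrite ?andbF ?leq_b1.
apply: subset_leq_card; apply/subsetP => u; rewrite !inE => /and3P [ua uS vu].
by rewrite ua uS vu orbT !andbT; apply: contraNneq bNS => <-.
Qed.

End TotalDomination.

Local Notation KK n m := (cartprod (@Kadj n) (@Kadj m)).

Lemma KKE n m (a c : 'I_n) (b d : 'I_m) :
  KK n m (a, b) (c, d) = (a == c) && (b != d) || (b == d) && (a != c).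
Proof. by []. Qed.

Section RookGraph.

Variables n m : nat.
Implicit Types S : {set 'I_n * 'I_m}.

Definition row_of S (i : 'I_n) := [set u in S | u.1 == i].
Definition col_of S (j : 'I_m) := [set u in S | u.2 == j].

Lemma card_ge_columns S : (forall j, 1 < #|col_of S j|) -> 2 * m <= #|S|.
Proof.
move=> colS; have -> : #|S| = \sum_j #|col_of S j|.
  rewrite -sum1_card (partition_big (fun u : 'I_n * 'I_m => u.2) predT) //=.
  by apply: eq_bigr => j _; rewrite -sum1_card; apply: eq_bigl => u; rewrite inE.
by rewrite mulnC -[X in X * 2]card_ord -sum_nat_const; apply: leq_sum.
Qed.

Lemma nbhd_sub_row_col S i j :
  nbhd (KK n m) S (i, j) \subset (row_of S i :\ (i, j)) :|: col_of S j.
Proof.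
apply/subsetP => -[a b]; rewrite !inE KKE xpair_eqE /=.
case/andP=> -> /orP [] /andP [/eqP ->]; rewrite !eqxx ?orbT //= andbT eq_sym.
by move=> /negbTE ->.
Qed.

Lemma card_row_col_ge S i j : total2dom (KK n m) S ->
  1 < #|row_of S i :\ (i, j)| + #|col_of S j|.
Proof.
move/total2domP/(_ (i, j))/leq_trans; apply.
by apply: leq_trans (subset_leq_card (nbhd_sub_row_col S i j)) (leq_card_setU _ _).
Qed.

Lemma total2dom_two_columns (j0 j1 : 'I_m) : 1 < n -> j0 != j1 ->
  total2dom (KK n m) (setX [set: 'I_n] [set j0; j1]).
Proof.
move=> n_gt1 j01; apply/total2domP => -[i j]; apply/card_gt1P.
have [i' i'i] : exists i' : 'I_n, i' != i.
  have /card_gt0P [i' ] : 0 < #|[set~ i]| by rewrite cardsC1 card_ord; lia.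
  by rewrite !inE; exists i'.
case: (boolP (j \in [set j0; j1])) => jJ.
  have [j' j'J j'j] : exists2 j', j' \in [set j0; j1] & j' != j.
    by case/set2P: jJ => ->; [exists j1 | exists j0]; rewrite ?inE ?eqxx ?orbT // eq_sym.
  exists (i, j'), (i', j); rewrite !in_nbhd !in_setX !in_setT /= !KKE jJ j'J !eqxx.
  by rewrite /= xpair_eqE !(eq_sym i) !(eq_sym j) i'i j'j (negbTE j'j) !andbF.
exists (i, j0), (i, j1); rewrite !in_nbhd !in_setX !in_setT !set21 !set22 xpair_eqE /=.
by move: jJ; rewrite !KKE !eqxx (negbTE j01) andbF !inE negb_or => /andP [-> ->].
Qed.

Lemma rows_or_columns S : 0 < n -> total2dom (KK n m) S ->
  (forall i, 0 < #|row_of S i|) /\ (exists r, 1 < #|row_of S r|) \/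
  (forall j, 1 < #|col_of S j|).
Proof.
move=> n_gt0 domS; have row_col i j := card_row_col_ge i j domS.
case: (boolP [forall i, 0 < #|row_of S i|]) => [/forallP rowsS | ]; last first.
  rewrite negb_forall => /existsP [i0]; rewrite -leqNgt leqn0 => /eqP row0.
  right => j; have := row_col i0 j.
  have := subset_leq_card (subsetDl (row_of S i0) [set (i0, j)]).
  by rewrite row0 leqn0 => /eqP ->.
case: (boolP [exists r, 1 < #|row_of S r|]) => [/existsP row2 | ]; first by left.
rewrite negb_exists => /forallP no_row2; right => j.
have row_le1 i : #|row_of S i| <= 1 by rewrite leqNgt; exact: no_row2.
case: (set_0Vmem (col_of S j)) => [col0 | [[x j']]].
  have := row_col (Ordinal n_gt0) j; rewrite col0 cards0 addn0 => /leq_trans.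
  by move/(_ _ (subset_leq_card (subsetDl _ _))); rewrite ltnNge row_le1.
rewrite inE => /andP [xS /eqP /= j'j]; subst j'.
have := row_col x j; have := row_le1 x; rewrite (cardsD1 (x, j)) inE xS eqxx /=.
by rewrite add1n ltnS leqn0 => /eqP ->.
Qed.

End RookGraph.

Lemma exists_total2dom_KK n m : 1 < n -> 1 < m -> exists S, total2dom (KK n m) S.
Proof.
move=> n_gt1 m_gt1; exists (setX setT [set Ordinal (ltnW m_gt1); Ordinal m_gt1]).
exact: total2dom_two_columns.
Qed.

Lemma gamma2t_KK_le_double n m : 1 < n -> 1 < m -> gamma2t_KK n m <= 2 * n.
Proof.
move=> n_gt1 m_gt1; pose j0 := Ordinal (ltnW m_gt1); pose j1 := Ordinal m_gt1.
have /gamma2t_le/leq_trans -> // := @total2dom_two_columns n m j0 j1 n_gt1 isT.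
by rewrite cardsX cardsT card_ord cards2 mulnC.
Qed.

Section ColumnSurgery.

Variables n m : nat.

Definition lift_col (j : 'I_m.+1) (u : 'I_n * 'I_m) : 'I_n * 'I_m.+1 :=
  (u.1, lift j u.2).

Lemma lift_col_inj j : injective (lift_col j).
Proof.
by move=> [a b] [c d] [-> lift_bd]; congr (_, _); apply: (@lift_inj _ j); exact: val_inj.
Qed.

Lemma card_nbhd_lift_col (S : {set 'I_n * 'I_m.+1}) j i k :
  #|nbhd (KK n m.+1) S (i, lift j k)| =
  ((i, j) \in S) + #|nbhd (KK n m) (lift_col j @^-1: S) (i, k)|.
Proof.
rewrite (cardsD1 (i, j)) in_nbhd KKE eqxx lift_eqF andbT.
congr (_ + _); rewrite -(card_imset _ (@lift_col_inj j)); apply: eq_card => -[a b].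
rewrite !inE; case: (unliftP j b) => [b' -> | ->].
  rewrite -[(a, lift j b')]/(lift_col j (a, b')) mem_imset ?inE; last exact: lift_col_inj.
  by rewrite xpair_eqE lift_eqF andbF !KKE /= (inj_eq lift_inj).
rewrite KKE lift_eqF xpair_eqE /= andbT orbF (eq_sym i).
rewrite (_ : _ && _ = false); last by case: (a =P i) => [->|_]; rewrite ?eqxx ?andbF.
apply/esym/imsetP => -[u _ []] _ /eqP; by rewrite eq_liftF.
Qed.

Lemma gamma2t_KK_le_drop_column (S : {set 'I_n * 'I_m.+1}) j :
  (forall (i : 'I_n) (k : 'I_m), ((i, j) \in S) + 2 <= #|nbhd (KK n m.+1) S (i, lift j k)|) ->
  gamma2t_KK n m <= #|S|.
Proof.
move=> domS; apply: (@leq_trans #|lift_col j @^-1: S|).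
  apply: gamma2t_le; apply/total2domP => -[i k].
  by rewrite -(leq_add2l ((i, j) \in S)) -card_nbhd_lift_col.
rewrite -(card_imset _ (@lift_col_inj j)); apply: subset_leq_card.
by apply/subsetP => _ /imsetP [u + ->]; rewrite inE.
Qed.

Lemma gamma2t_KK_le_add_column (S : {set 'I_n * 'I_m}) (j : 'I_m.+1) r :
  total2dom (KK n m) S -> (forall i, 0 < #|row_of S i|) -> 1 < #|row_of S r| ->
  gamma2t_KK n m.+1 <= #|S|.+1.
Proof.
move=> /total2domP domS rowsS row_r; pose T := (r, j) |: lift_col j @: S.
have liftT u : (lift_col j u \in T) = (u \in S).
  rewrite !inE mem_imset; last exact: lift_col_inj.
  by rewrite xpair_eqE lift_eqF andbF.
apply: (@leq_trans #|T|); last first.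
  by rewrite cardsU1 card_imset; [case: (_ \notin _) | exact: lift_col_inj].
apply: gamma2t_le; apply/total2domP => -[i b]; case: (unliftP j b) => [k -> | ->].
  have preT : lift_col j @^-1: T = S by apply/setP => u; rewrite inE liftT.
  by rewrite card_nbhd_lift_col preT (leq_trans (domS (i, k))) ?leq_addl.
apply/card_gt1P; case: (eqVneq i r) => [-> | ir].
  have [[a1 l1] [[a2 l2] []]] := card_gt1P row_r.
  rewrite !inE => /andP [u1S /eqP /= a1r] /andP [u2S /eqP /= a2r] u12; subst a1 a2.
  exists (lift_col j (r, l1)), (lift_col j (r, l2)).
  by rewrite !in_nbhd !liftT u1S u2S !KKE /= eqxx !eq_liftF (inj_eq (@lift_col_inj j)).
have [[a l]] := card_gt0P (rowsS i); rewrite inE => /andP [uS /eqP /= ai]; subst a.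
exists (r, j), (lift_col j (i, l)); rewrite !in_nbhd setU11 liftT uS !KKE /=.
by rewrite eq_liftF ir xpair_eqE eq_liftF andbF !eqxx /= orbT.
Qed.

Lemma gamma2t_KK_le_full_row (S : {set 'I_n * 'I_m.+1}) x j :
  2 < m -> total2dom (KK n m.+1) S -> (forall i : 'I_n, ((i, j) \in S) = (i == x)) ->
  (forall k, (x, k) \in S) -> gamma2t_KK n m <= #|S|.
Proof.
move=> m_gt2 /total2domP domS colS rowS.
apply: (gamma2t_KK_le_drop_column (j := j)) => i k; rewrite colS.
case: (eqVneq i x) => [-> | _]; last exact: domS.
have row_nbhd : [set (x, l) | l in [set~ lift j k]] \subset nbhd (KK n m.+1) S (x, lift j k).
  apply/subsetP => _ /imsetP [l + ->]; rewrite in_nbhd rowS KKE !inE eqxx /= => lk.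
  by rewrite eq_sym lk.
apply: leq_trans (subset_leq_card row_nbhd).
by rewrite card_imset ?cardsC1 ?card_ord; [lia | move=> ? ? []].
Qed.

Lemma gamma2t_KK_le_move_off_column (S : {set 'I_n * 'I_m.+1}) x j k0 :
  total2dom (KK n m.+1) S -> (forall i : 'I_n, ((i, j) \in S) = (i == x)) ->
  (x, k0) \notin S -> gamma2t_KK n m <= #|S|.
Proof.
move=> /total2domP domS colS xk0S; have xjS : (x, j) \in S by rewrite colS.
have k0j : k0 != j by apply: contraNneq xk0S => ->.
pose T := (x, k0) |: S :\ (x, j).
apply: (@leq_trans #|T|); last first.
  by rewrite cardsU1 [X in _ <= X](cardsD1 (x, j)) xjS; case: (_ \notin _).
apply: (gamma2t_KK_le_drop_column (j := j)) => i k.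
have -> : ((i, j) \in T) = false.
  rewrite !inE !xpair_eqE (eq_sym j k0) (negbTE k0j) andbF colS /=.
  by case: (i == x); rewrite ?eqxx.
case: (boolP ((i, lift j k) == (x, k0))) => [/eqP [ix k0E] | v_ne].
  subst i k0.
  apply: leq_trans (domS (x, j)) (subset_leq_card _); apply/subsetP => -[a b].
  rewrite !in_nbhd !inE !KKE !xpair_eqE => /andP [abS /orP [] /andP [/eqP xa]] => [bj | ax].
    subst a; have bk : b != lift j k by apply: contraTneq abS => ->.
    by rewrite abS (negbTE bk) (eq_sym b j) (negbTE bj) (eq_sym (lift j k)) bk !eqxx.
  by move: abS; rewrite -xa colS eq_sym (negbTE ax).
apply: (leq_trans (domS (i, lift j k))); apply: card_nbhd_move xk0S _.
rewrite !KKE lift_eqF /= orbF andbT => /eqP ix; subst i.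
by move: v_ne; rewrite xpair_eqE !eqxx /= => ->.
Qed.

Lemma gamma2t_KK_le_sparse_column (S : {set 'I_n * 'I_m.+1}) j :
  2 < m -> total2dom (KK n m.+1) S -> #|col_of S j| <= 1 -> gamma2t_KK n m <= #|S|.
Proof.
move=> m_gt2 domS col_le1; have colE (i : 'I_n) : ((i, j) \in S) = ((i, j) \in col_of S j).
  by rewrite inE eqxx andbT.
case: (set_0Vmem (col_of S j)) => [col0 | [[x j'] xj']].
  apply: (gamma2t_KK_le_drop_column (j := j)) => i k.
  by rewrite colE col0 inE; exact: (total2domP _ _ domS).
move: (xj'); rewrite inE => /andP [_ /eqP /= j'j]; subst j'.
have colS (i : 'I_n) : ((i, j) \in S) = (i == x).
  rewrite colE; apply/idP/eqP => [ij | -> //].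
  by have [] := card_le1_eqP col_le1 _ _ ij xj'.
case: (boolP [forall k, (x, k) \in S]) => [/forallP rowS | ].
  exact: gamma2t_KK_le_full_row m_gt2 domS colS rowS.
rewrite negb_forall => /existsP [k0 xk0S].
exact: gamma2t_KK_le_move_off_column domS colS xk0S.
Qed.

End ColumnSurgery.

Lemma gamma2t_KK_succ_ge n m : 1 < n -> 2 < m -> n <= m.+1 ->
  minn (2 * n) (gamma2t_KK n m) <= gamma2t_KK n m.+1.
Proof.
move=> n_gt1 m_gt2 n_le; have [|S0 domS0] := exists_total2dom_KK (m := m.+1) n_gt1; first lia.
have [S domS] := gamma2t_attained domS0; rewrite -[gamma2t _]/(gamma2t_KK n m.+1) => ->.
case: (boolP [forall j, 1 < #|col_of S j|]) => [/forallP cols | ].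
  by rewrite geq_min (leq_trans _ (card_ge_columns cols)) ?leq_mul2l.
rewrite negb_forall => /existsP [j]; rewrite -leqNgt => col_le1.
by rewrite geq_min (gamma2t_KK_le_sparse_column m_gt2 domS col_le1) orbT.
Qed.

Lemma gamma2t_KK_succ_le n m : 1 < n -> n <= m ->
  gamma2t_KK n m.+1 <= (gamma2t_KK n m).+1.
Proof.
move=> n_gt1 n_le; have [S0 domS0] := exists_total2dom_KK n_gt1 (leq_trans n_gt1 n_le).
have [S domS] := gamma2t_attained domS0; rewrite -[gamma2t _]/(gamma2t_KK n m) => ->.
case: (rows_or_columns (ltnW n_gt1) domS) => [[rowsS [r row_r]] | cols].
  exact: (@gamma2t_KK_le_add_column n m S ord0 r domS rowsS row_r).
apply: (leq_trans (@gamma2t_KK_le_double n m.+1 n_gt1 (leq_trans (ltnW n_gt1) n_le))).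
by apply: leq_trans (leqW (card_ge_columns cols)); rewrite leq_mul2l n_le orbT.
Qed.

Lemma gamma2t_KK_square_le n m : 2 < n -> n <= m -> gamma2t_KK n n <= gamma2t_KK n m.
Proof.
move=> n_gt2; elim: m => [|m IHm]; first lia.
rewrite leq_eqVlt ltnS => /predU1P [<- // | n_le].
have le_min : gamma2t_KK n n <= minn (2 * n) (gamma2t_KK n m).
  by rewrite leq_min IHm // gamma2t_KK_le_double //; lia.
by apply: leq_trans le_min (gamma2t_KK_succ_ge _ _ _); lia.
Qed.

Lemma gamma2t_KK_le_square_add n m : 1 < n -> n <= m ->
  gamma2t_KK n m <= gamma2t_KK n n + (m - n).
Proof.
move=> n_gt1; elim: m => [|m IHm]; first lia.
rewrite leq_eqVlt ltnS => /predU1P [<- | n_le]; first by rewrite subnn addn0.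
have := gamma2t_KK_succ_le n_gt1 n_le; have := IHm n_le; lia.
Qed.

Theorem proposition16 (n m : nat) (hn : 3 <= n) (hnm : n <= m) :
  gamma2t_KK n n <= gamma2t_KK n m /\
  gamma2t_KK n m <= minn (2 * n) (gamma2t_KK n n + (m - n)).
Proof.
split; first exact: gamma2t_KK_square_le.
rewrite leq_min gamma2t_KK_le_double ?gamma2t_KK_le_square_add //; lia.
Qed.
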